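(* Let $p(n)=\sum_{k=0}^d a_k n^k$ be a polynomial with real coefficients $a_0,\ldots,a_d$, and let $p_k(n)=a_k n^k$ denote its terms. Then the sequence $\{p(n)\bmod 1\}_{n\ge0}$ in $\mathbb{T}$ has the repetition property if and only if the sequences $\{p_k(n)\bmod 1\}_{n\ge0}$, $0\le k\le d$, have the joint repetition property.
   Context: $\mathbb{T}=\mathbb{R}/\mathbb{Z}$ with metric $\mathrm{dist}(x,y)=\langle x-y\rangle$, where $\langle\tau\rangle=\min\{|\hat\tau-p|:p\in\mathbb{Z}\}$ for any representative $\hat\tau\in\mathbb{R}$ of $\tau$. $\mathbb{Z}_+=\{1,2,\ldots\}$. A sequence $\{\omega_n\}_{n\ge0}$ in a metric space $\Omega$ has the repetition property if for every $\varepsilon>0$ and $r \in \mathbb{Z}_+$ there exists $q \in \mathbb{Z}_+$ such that $\mathrm{dist}(\omega_n,\omega_{n+q}) < \varepsilon$ for $n = 0,1,\ldots, rq$. A family of sequences has the joint repetition property if each of them has the repetition property and, for each finite subfamily and each $\varepsilon>0$, $r\in\mathbb{Z}_+$, a single $q\in\mathbb{Z}_+$ can be chosen that works simultaneously for all sequences in the subfamily. *)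

From Stdlib Require Import Reals Lra Lia List.
Open Scope R_scope.

(* <t> = distance from t to the nearest integer = min_{p in Z} |t - p|.
   With f = t - floor t in [0,1), this is min(f, 1-f). *)
Definition frac (t : R) : R := t - IZR (Int_part t).
Definition tnorm (t : R) : R := Rmin (frac t) (1 - frac t).

(* Metric on T = R/Z, on representatives. *)
Definition tdist (x y : R) : R := tnorm (x - y).

(* A sequence in T, given by real representatives w : nat -> R
   (i.e. the sequence w n mod 1). *)
Definition repetition (w : nat -> R) : Prop :=
  forall (eps : R) (r : nat), 0 < eps -> (1 <= r)%nat ->
    exists q : nat, (1 <= q)%nat /\
      forall n : nat, (n <= r * q)%nat -> tdist (w n) (w (n + q)%nat) < eps.

Definition joint_repetition {I : Type} (F : I -> nat -> R) : Prop :=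
  (forall i, repetition (F i)) /\
  forall (S : list I) (eps : R) (r : nat), 0 < eps -> (1 <= r)%nat ->
    exists q : nat, (1 <= q)%nat /\
      forall i, In i S ->
        forall n : nat, (n <= r * q)%nat -> tdist (F i n) (F i (n + q)%nat) < eps.

Definition poly_term (a : nat -> R) (k n : nat) : R := a k * INR n ^ k.
Definition poly_eval (a : nat -> R) (d n : nat) : R := sum_f_R0 (fun k => poly_term a k n) d.

From Stdlib Require Import Reals Lra Lia List ZArith Factorial.
Open Scope R_scope.

(* Both directions are phrased with almost periods: q is an eps-almost period
   of w on [0, N] if dist(w n, w (n+q)) < eps for all n <= N.
   (<=) By the triangle inequality on T, a common almost period of all the
   p_k with error eps/(d+1) is an almost period of p with error eps.
   (=>) By induction on the degree (all_terms_almost_periodic): a good enough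
   almost period q of p has a multiple m q, with m bounded, which is a common
   almost period of all the terms.  For the top term, g(n) = p(n) - p(n+q) is
   close to integers on a long range and its (d+1)-th difference vanishes; it
   therefore lifts to a small real sequence h with the same property
   (small_lift), whose d-th difference, scaled by coarse differences of step s,
   is small.  As that difference is -(d+1)! a_(d+1) q mod Z, the real number
   a_(d+1) (d+1)! q is very close to an integer, which makes (d+1)! q an almost
   period of the top term; subtracting it leaves a polynomial of lower degree. *)

Lemma frac_bounds t : 0 <= frac t < 1.
Proof. unfold frac. destruct (base_Int_part t). lra. Qed.

Lemma tnorm_attained x : exists z, tnorm x = Rabs (x - IZR z).
Proof.
  unfold tnorm. destruct (frac_bounds x) as [H1 H2].
  unfold Rmin. destruct (Rle_dec (frac x) (1 - frac x)).
  - exists (Int_part x). unfold frac in *. rewrite Rabs_right; lra.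
  - exists (Int_part x + 1)%Z. rewrite plus_IZR. unfold frac in *.
    rewrite Rabs_left; lra.
Qed.

Lemma tnorm_le x z : tnorm x <= Rabs (x - IZR z).
Proof.
  unfold tnorm. destruct (frac_bounds x) as [H1 H2].
  assert (E : x - IZR z = frac x - IZR (z - Int_part x)).
  { unfold frac. rewrite minus_IZR. ring. }
  rewrite E. destruct (Z_le_gt_dec (z - Int_part x) 0) as [Hk|Hk].
  - apply IZR_le in Hk. apply Rle_trans with (frac x); [apply Rmin_l|].
    rewrite Rabs_right; lra.
  - assert (Hk' : (1 <= z - Int_part x)%Z) by lia. apply IZR_le in Hk'.
    apply Rle_trans with (1 - frac x); [apply Rmin_r|].
    rewrite Rabs_left1; lra.
Qed.

Lemma tnorm_shift x z : tnorm (x + IZR z) = tnorm x.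
Proof.
  apply Rle_antisym.
  - destruct (tnorm_attained x) as [z0 H]. rewrite H.
    replace (x - IZR z0) with (x + IZR z - IZR (z0 + z)) by (rewrite plus_IZR; ring).
    apply tnorm_le.
  - destruct (tnorm_attained (x + IZR z)) as [z0 H]. rewrite H.
    replace (x + IZR z - IZR z0) with (x - IZR (z0 - z)) by (rewrite minus_IZR; ring).
    apply tnorm_le.
Qed.

Lemma tnorm_opp x : tnorm (- x) = tnorm x.
Proof.
  apply Rle_antisym.
  - destruct (tnorm_attained x) as [z0 H]. rewrite H.
    replace (x - IZR z0) with (- (- x - IZR (- z0))) by (rewrite opp_IZR; ring).
    rewrite Rabs_Ropp. apply tnorm_le.
  - destruct (tnorm_attained (- x)) as [z0 H]. rewrite H.
    replace (- x - IZR z0) with (- (x - IZR (- z0))) by (rewrite opp_IZR; ring).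
    rewrite Rabs_Ropp. apply tnorm_le.
Qed.

Lemma tnorm_add x y : tnorm (x + y) <= tnorm x + tnorm y.
Proof.
  destruct (tnorm_attained x) as [zx Hx]. destruct (tnorm_attained y) as [zy Hy].
  rewrite Hx, Hy. eapply Rle_trans; [apply (tnorm_le _ (zx + zy))|].
  rewrite plus_IZR.
  replace (x + y - (IZR zx + IZR zy)) with ((x - IZR zx) + (y - IZR zy)) by ring.
  apply Rabs_triang.
Qed.

Lemma tnorm_sub x y : tnorm (x - y) <= tnorm x + tnorm y.
Proof. unfold Rminus. rewrite <- (tnorm_opp y). apply tnorm_add. Qed.

Lemma tnorm_abs x : tnorm x <= Rabs x.
Proof. replace x with (x - IZR 0) at 2 by (simpl; ring). apply tnorm_le. Qed.

Lemma tnorm_small_abs x eps :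
  Rabs x <= 1 - eps -> tnorm x < eps -> eps <= 1/2 -> Rabs x < eps.
Proof.
  intros Hx Hnear Heps. destruct (tnorm_attained x) as [z Hz]. rewrite Hz in Hnear.
  assert (Hz0 : z = 0%Z).
  { assert (Hbounds : -1 < IZR z < 1).
    { revert Hx Hnear. unfold Rabs. repeat destruct Rcase_abs; intros; lra. }
    destruct Hbounds as [Hlo Hhi]. apply lt_IZR in Hlo. apply lt_IZR in Hhi. lia. }
  subst z. simpl in Hnear. now rewrite Rminus_0_r in Hnear.
Qed.

Lemma mul_le_of_le_div c y z : 0 < c -> z <= y / c -> c * z <= y.
Proof.
  intros Hc Hz. apply Rmult_le_compat_l with (r := c) in Hz; [|lra].
  replace (c * (y / c)) with y in Hz by (field; lra). exact Hz.
Qed.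

Definition isZ (x : R) : Prop := exists z, x = IZR z.

Lemma isZ_add x y : isZ x -> isZ y -> isZ (x + y).
Proof. intros [a ->] [b ->]. exists (a + b)%Z. now rewrite plus_IZR. Qed.

Lemma isZ_sub x y : isZ x -> isZ y -> isZ (x - y).
Proof. intros [a ->] [b ->]. exists (a - b)%Z. now rewrite minus_IZR. Qed.

Lemma isZ_mul x y : isZ x -> isZ y -> isZ (x * y).
Proof. intros [a ->] [b ->]. exists (a * b)%Z. now rewrite mult_IZR. Qed.

Lemma isZ_INR n : isZ (INR n).
Proof. exists (Z.of_nat n). apply INR_IZR_INZ. Qed.

Lemma tnorm_isZ x y : isZ y -> tnorm (x + y) = tnorm x.
Proof. intros [z ->]. apply tnorm_shift. Qed.

Lemma tdist_tri x y z : tdist x z <= tdist x y + tdist y z.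
Proof.
  unfold tdist. replace (x - z) with ((x - y) + (y - z)) by ring. apply tnorm_add.
Qed.

Lemma tdist_add x y x' y' : tdist (x + y) (x' + y') <= tdist x x' + tdist y y'.
Proof.
  unfold tdist. replace (x + y - (x' + y')) with ((x - x') + (y - y')) by ring.
  apply tnorm_add.
Qed.

Lemma tdist_cancel x y x' y' : tdist x x' <= tdist (x + y) (x' + y') + tdist y y'.
Proof.
  unfold tdist. replace (x - x') with ((x + y - (x' + y')) - (y - y')) by ring.
  apply tnorm_sub.
Qed.

Definition almost_period (w : nat -> R) (q : nat) (eps : R) (N : nat) : Prop :=
  forall n, (n <= N)%nat -> tdist (w n) (w (n + q)%nat) < eps.

Lemma almost_period_mono w q e1 e2 N1 N2 :
  almost_period w q e1 N1 -> e1 <= e2 -> (N2 <= N1)%nat -> almost_period w q e2 N2.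
Proof. intros H He HN n Hn. eapply Rlt_le_trans; [apply H; lia | exact He]. Qed.

Lemma almost_period_multiple w q e N m : (1 <= m)%nat ->
  almost_period w q e (N + m * q) -> almost_period w (m * q) (INR m * e) N.
Proof.
  intro Hm. destruct m as [|m]; [lia|]. clear Hm.
  induction m as [|m IH]; intros Hper n Hn.
  - rewrite Nat.mul_1_l, Rmult_1_l. apply Hper. lia.
  - assert (Hfirst : tdist (w n) (w (n + S m * q)%nat) < INR (S m) * e).
    { apply IH; [|lia]. apply (almost_period_mono _ _ _ _ _ _ Hper); [lra|nia]. }
    assert (Hlast : tdist (w (n + S m * q)%nat) (w (n + S m * q + q)%nat) < e)
      by (apply Hper; nia).
    replace (n + S (S m) * q)%nat with (n + S m * q + q)%nat by lia.
    eapply Rle_lt_trans; [apply (tdist_tri _ (w (n + S m * q)%nat))|]. rewrite S_INR. lra.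
Qed.

Lemma almost_period_add u v q e1 e2 N :
  almost_period u q e1 N -> almost_period v q e2 N ->
  almost_period (fun n => u n + v n) q (e1 + e2) N.
Proof.
  intros Hu Hv n Hn. eapply Rle_lt_trans; [apply tdist_add|].
  specialize (Hu n Hn). specialize (Hv n Hn). lra.
Qed.

Lemma almost_period_sub u v q e1 e2 N :
  almost_period (fun n => u n + v n) q e1 N -> almost_period v q e2 N ->
  almost_period u q (e1 + e2) N.
Proof.
  intros Huv Hv n Hn. eapply Rle_lt_trans; [apply (tdist_cancel _ (v n) _ (v (n + q)%nat))|].
  specialize (Huv n Hn). specialize (Hv n Hn). cbv beta in Huv. lra.
Qed.

Definition Delta (f : nat -> R) : nat -> R := fun n => f (S n) - f n.

Fixpoint Delta_n (m : nat) (f : nat -> R) : nat -> R :=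
  match m with O => f | S m' => Delta_n m' (Delta f) end.

Lemma Delta_n_ext m : forall f g, (forall n, f n = g n) ->
  forall n, Delta_n m f n = Delta_n m g n.
Proof.
  induction m; intros f g H n; simpl; [apply H|].
  apply IHm. intro k. unfold Delta. rewrite !H. reflexivity.
Qed.

Lemma Delta_n_lin m : forall f g al be n,
  Delta_n m (fun k => al * f k + be * g k) n = al * Delta_n m f n + be * Delta_n m g n.
Proof.
  induction m; intros f g al be n; simpl; [reflexivity|].
  rewrite <- IHm. apply Delta_n_ext. intro k. unfold Delta. ring.
Qed.

Lemma Delta_n_sub m f g n : Delta_n m (fun k => f k - g k) n = Delta_n m f n - Delta_n m g n.
Proof.
  rewrite (Delta_n_ext m _ (fun k => 1 * f k + (-1) * g k)) by (intro; ring).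
  rewrite Delta_n_lin. ring.
Qed.

Lemma Delta_n_scal m f c n : Delta_n m (fun k => c * f k) n = c * Delta_n m f n.
Proof.
  rewrite (Delta_n_ext m _ (fun k => c * f k + 0 * f k)) by (intro; ring).
  rewrite Delta_n_lin. ring.
Qed.

Lemma Delta_n_sum m (F : nat -> nat -> R) K n :
  Delta_n m (fun k => sum_f_R0 (fun i => F i k) K) n = sum_f_R0 (fun i => Delta_n m (F i) n) K.
Proof.
  induction K; simpl; [reflexivity|].
  rewrite (Delta_n_ext m _ (fun k => 1 * sum_f_R0 (fun i => F i k) K + 1 * F (S K) k))
    by (intro; simpl; ring).
  rewrite Delta_n_lin, IHK. ring.
Qed.

Lemma Delta_n_shift m : forall f q n,
  Delta_n m (fun k => f (k + q)%nat) n = Delta_n m f (n + q)%nat.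
Proof.
  induction m; intros f q n; simpl; [reflexivity|].
  rewrite <- IHm. apply Delta_n_ext. intro k. reflexivity.
Qed.

Lemma Delta_n_succ m : forall f n, Delta_n (S m) f n = Delta_n m f (S n) - Delta_n m f n.
Proof.
  induction m; intros f n; [reflexivity|].
  change (Delta_n (S (S m)) f n) with (Delta_n (S m) (Delta f) n). apply IHm.
Qed.

Lemma Delta_n_zero_up m f : (forall n, Delta_n m f n = 0) ->
  forall t n, Delta_n (t + m) f n = 0.
Proof.
  intros H t. induction t; intro n; [apply H|].
  simpl plus. rewrite Delta_n_succ, !IHt. ring.
Qed.

Lemma Delta_n_isZ m : forall f, (forall n, isZ (f n)) -> forall n, isZ (Delta_n m f n).
Proof.
  induction m; intros f H n; simpl; [apply H|].
  apply IHm. intro k. unfold Delta. apply isZ_sub; apply H.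
Qed.

Fixpoint psum (g : nat -> R) (n : nat) : R :=
  match n with O => 0 | S n' => psum g n' + g n' end.

Lemma psum_ext g h s : (forall i, g i = h i) -> psum g s = psum h s.
Proof. intro H. induction s; simpl; [reflexivity|]. rewrite IHs, H. reflexivity. Qed.

Lemma psum_const c s : psum (fun _ => c) s = INR s * c.
Proof. induction s; simpl psum; [simpl; ring|]. rewrite IHs, S_INR. ring. Qed.

Lemma telescope u n s : u (n + s)%nat - u n = psum (fun i => Delta u (n + i)%nat) s.
Proof.
  induction s; simpl; [rewrite Nat.add_0_r; ring|].
  rewrite <- IHs. unfold Delta. rewrite Nat.add_succ_r. ring.
Qed.

Lemma Delta_n_slope m f c k s : (forall n, Delta_n (S m) f n = c) ->
  Delta_n m f (k + s)%nat - Delta_n m f k = INR s * c.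
Proof.
  intro H. rewrite telescope, (psum_ext _ (fun _ => c)); [apply psum_const|].
  intro i. unfold Delta. rewrite <- Delta_n_succ. apply H.
Qed.

Definition Delta_step (s : nat) (f : nat -> R) : nat -> R := fun n => f (n + s)%nat - f n.

Fixpoint Delta_step_n (m s : nat) (f : nat -> R) : nat -> R :=
  match m with O => f | S m' => Delta_step_n m' s (Delta_step s f) end.

Lemma Delta_n_Delta_step m : forall s f n,
  Delta_n m (Delta_step s f) n = Delta_n m f (n + s)%nat - Delta_n m f n.
Proof.
  induction m; intros s f n; simpl; [reflexivity|].
  rewrite (Delta_n_ext m _ (Delta_step s (Delta f))); [apply IHm|].
  intro k. unfold Delta, Delta_step. rewrite Nat.add_succ_l. ring.
Qed.

Lemma Delta_step_n_const m : forall s f c, (forall n, Delta_n m f n = c) ->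
  forall n, Delta_step_n m s f n = INR s ^ m * c.
Proof.
  induction m; intros s f c H n; simpl; [rewrite H; ring|].
  rewrite (IHm s (Delta_step s f) (INR s * c)); [ring|].
  intro k. rewrite Delta_n_Delta_step. apply Delta_n_slope. exact H.
Qed.

Lemma Delta_step_n_bound m : forall s f L eps,
  (forall n, (n < L)%nat -> Rabs (f n) <= eps) ->
  forall n, (n + m * s < L)%nat -> Rabs (Delta_step_n m s f n) <= 2 ^ m * eps.
Proof.
  induction m; intros s f L eps H n Hn; simpl.
  - rewrite Rmult_1_l. apply H. lia.
  - replace (2 * 2 ^ m * eps) with (2 ^ m * (2 * eps)) by ring.
    apply (IHm s (Delta_step s f) (L - s)%nat); [|simpl in Hn; lia].
    intros k Hk. unfold Delta_step. eapply Rle_trans; [apply Rabs_triang|].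
    rewrite Rabs_Ropp.
    assert (Rabs (f (k + s)%nat) <= eps) by (apply H; lia).
    assert (Rabs (f k) <= eps) by (apply H; lia). lra.
Qed.

Lemma lift_with_difference f h' N eps : 0 < eps -> eps <= 1/4 ->
  (forall n, (n < N)%nat -> tnorm (f n) < eps) ->
  (forall n, (S n < N)%nat -> Rabs (h' n) < 2 * eps) ->
  (forall n, isZ (Delta f n - h' n)) ->
  exists h, (forall n, (n < N)%nat -> Rabs (h n) < eps) /\
            (forall n, Delta h n = h' n) /\ (forall n, isZ (f n - h n)).
Proof.
  intros He He4 Hf Hh' HZ.
  destruct (tnorm_attained (f 0%nat)) as [z0 Hz0].
  set (h := fun n => f 0%nat - IZR z0 + psum h' n).
  assert (Hint : forall n, isZ (f n - h n)).
  { unfold h. induction n; simpl psum.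
    - exists z0. ring.
    - replace (f (S n) - (f 0%nat - IZR z0 + (psum h' n + h' n)))
        with ((f n - (f 0%nat - IZR z0 + psum h' n)) + (Delta f n - h' n))
        by (unfold Delta; ring).
      apply isZ_add; auto. }
  exists h. split; [|split; [intro n; unfold Delta, h; simpl psum; ring | exact Hint]].
  induction n; intro Hn.
  - unfold h. simpl psum. rewrite Rplus_0_r, <- Hz0. apply Hf. exact Hn.
  - assert (IH : Rabs (h n) < eps) by (apply IHn; lia).
    assert (Hs : Rabs (h' n) < 2 * eps) by (apply Hh'; exact Hn).
    assert (Hstep : h (S n) = h n + h' n) by (unfold h; simpl psum; ring).
    apply tnorm_small_abs; [| |lra].
    + rewrite Hstep. eapply Rle_trans; [apply Rabs_triang|lra].
    + destruct (Hint (S n)) as [z Hz].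
      replace (h (S n)) with (f (S n) + IZR (- z)) by (rewrite opp_IZR; lra).
      rewrite tnorm_shift. apply Hf. exact Hn.
Qed.

Lemma small_lift m : forall f N eps, 0 < eps -> eps * 2 ^ m <= 1/4 ->
  (forall n, (n < N)%nat -> tnorm (f n) < eps) ->
  (forall n, Delta_n (S m) f n = 0) ->
  exists h, (forall n, (n < N)%nat -> Rabs (h n) < eps) /\
            (forall n, Delta_n (S m) h n = 0) /\ (forall n, isZ (f n - h n)).
Proof.
  induction m; intros f N eps He Hs Hf HD.
  - simpl in Hs.
    destruct (lift_with_difference f (fun _ => 0) N eps) as [h [Hsmall [Hdiff Hint]]];
      [lra|lra|exact Hf|intros; rewrite Rabs_R0; lra| |].
    + intro n. exists 0%Z. specialize (HD n). simpl in HD |- *. lra.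
    + exists h. repeat split; [exact Hsmall|intro n; apply Hdiff|exact Hint].
  - destruct (IHm (Delta f) (N - 1)%nat (2 * eps)) as [h' [H1 [H2 H3]]];
      [lra|simpl in Hs; lra| |intro n; apply HD|].
    + intros n Hn. unfold Delta. eapply Rle_lt_trans; [apply tnorm_sub|].
      assert (tnorm (f (S n)) < eps) by (apply Hf; lia).
      assert (tnorm (f n) < eps) by (apply Hf; lia). lra.
    + destruct (lift_with_difference f h' N eps) as [h [G1 [G2 G3]]]; auto.
      * simpl in Hs. assert (1 <= 2 ^ m) by (apply pow_R1_Rle; lra). nra.
      * intros n Hn. apply H1. lia.
      * exists h. repeat split; [exact G1| |exact G3]. intro n.
        change (Delta_n (S (S m)) h n) with (Delta_n (S m) (Delta h) n).
        rewrite (Delta_n_ext (S m) _ h' G2). apply H2.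
Qed.

Lemma near_integer_top_difference m g N s eps : 0 < eps -> eps * 2 ^ m <= 1/4 ->
  (forall n, (n < N)%nat -> tnorm (g n) < eps) ->
  (forall n, Delta_n (S m) g n = 0) -> (m * s < N)%nat ->
  exists z, Rabs (Delta_n m g 0%nat - IZR z) * INR s ^ m <= 2 ^ m * eps.
Proof.
  intros He Hs Hg HD Hms.
  destruct (small_lift m g N eps) as [h [Hsmall [Hpoly Hint]]]; auto.
  destruct (Delta_n_isZ m (fun n => g n - h n) Hint 0%nat) as [z Hz].
  exists z. rewrite Delta_n_sub in Hz.
  replace (Delta_n m g 0%nat - IZR z) with (Delta_n m h 0%nat) by lra.
  assert (Hconst : forall n, Delta_n m h n = Delta_n m h 0%nat).
  { intro n. pose proof (Delta_n_slope m h 0 0 n Hpoly) as E.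
    rewrite Nat.add_0_l, Rmult_0_r in E. lra. }
  rewrite <- (Rabs_right (INR s ^ m)) by (apply Rle_ge, pow_le, pos_INR).
  rewrite <- Rabs_mult, Rmult_comm, <- (Delta_step_n_const m s h _ Hconst 0%nat).
  apply (Delta_step_n_bound m s h N eps); [|lia].
  intros n Hn. left. apply Hsmall. exact Hn.
Qed.

Definition monomial (j : nat) : nat -> R := fun n => INR n ^ j.

Lemma C_diag j : C (S j) (S j) = 1.
Proof.
  unfold C. rewrite Nat.sub_diag. simpl (fact 0). simpl INR at 3.
  field. apply INR_fact_neq_0.
Qed.

Lemma C_pred j : C (S j) j = INR (S j).
Proof.
  unfold C. replace (S j - j)%nat with 1%nat by lia. simpl (fact 1).
  change (fact (S j)) with (S j * fact j)%nat.
  rewrite mult_INR. simpl (INR 1). field. apply INR_fact_neq_0.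
Qed.

Lemma Delta_monomial j n :
  Delta (monomial (S j)) n = sum_f_R0 (fun i => C (S j) i * monomial i n) j.
Proof.
  unfold Delta, monomial. rewrite S_INR, binomial.
  change (sum_f_R0 (fun i => C (S j) i * INR n ^ i * 1 ^ (S j - i)) (S j))
    with (sum_f_R0 (fun i => C (S j) i * INR n ^ i * 1 ^ (S j - i)) j +
          C (S j) (S j) * INR n ^ (S j) * 1 ^ (S j - S j)).
  rewrite C_diag, Nat.sub_diag.
  rewrite (sum_eq _ (fun i => C (S j) i * INR n ^ i)) by (intros i _; rewrite pow1; ring).
  simpl (1 ^ 0). ring.
Qed.

Lemma sum_f_R0_top F K : (forall i, (i < K)%nat -> F i = 0) -> sum_f_R0 F K = F K.
Proof.
  destruct K as [|K]; intro H; [reflexivity|]. simpl.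
  rewrite (sum_eq _ (fun _ => 0)), sum_cte by (intros; apply H; lia). ring.
Qed.

Lemma Delta_n_monomial j : (forall n, Delta_n j (monomial j) n = INR (fact j)) /\
  (forall m n, (j < m)%nat -> Delta_n m (monomial j) n = 0).
Proof.
  induction j as [j IH] using lt_wf_ind.
  assert (Htop : forall n, Delta_n j (monomial j) n = INR (fact j)).
  { destruct j as [|j]; [intro n; reflexivity|].
    intro n. simpl Delta_n.
    rewrite (Delta_n_ext j _ (fun k => sum_f_R0 (fun i => C (S j) i * monomial i k) j))
      by (intro; apply Delta_monomial).
    rewrite Delta_n_sum, sum_f_R0_top.
    - rewrite Delta_n_scal, (proj1 (IH j ltac:(lia))), C_pred.
      change (fact (S j)) with (S j * fact j)%nat. rewrite mult_INR. ring.
    - intros i Hi. rewrite Delta_n_scal, (proj2 (IH i ltac:(lia))) by lia. ring. }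
  split; [exact Htop|].
  intros m n Hm. replace m with ((m - S j) + S j)%nat by lia.
  apply Delta_n_zero_up. intro k. rewrite Delta_n_succ, !Htop. ring.
Qed.

Lemma Delta_n_poly_top a d n : Delta_n d (poly_eval a d) n = a d * INR (fact d).
Proof.
  unfold poly_eval, poly_term.
  change (fun k => sum_f_R0 (fun i => a i * INR k ^ i) d)
    with (fun k => sum_f_R0 (fun i => a i * monomial i k) d).
  rewrite Delta_n_sum, sum_f_R0_top.
  - rewrite Delta_n_scal, (proj1 (Delta_n_monomial d)). reflexivity.
  - intros i Hi. rewrite Delta_n_scal, (proj2 (Delta_n_monomial i)) by lia. ring.
Qed.

Lemma step_difference_Delta a d q :
  let g := fun n => poly_eval a (S d) n - poly_eval a (S d) (n + q)%nat in
  (forall n, Delta_n (S d) g n = 0) /\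
  Delta_n d g 0%nat = - (INR q * (a (S d) * INR (fact (S d)))).
Proof.
  intro g. unfold g. split.
  - intro n. rewrite Delta_n_sub, (Delta_n_shift (S d) (poly_eval a (S d))).
    rewrite !Delta_n_poly_top. ring.
  - pose proof (Delta_n_slope d (poly_eval a (S d)) (a (S d) * INR (fact (S d))) 0 q
                  (Delta_n_poly_top a (S d))) as Hslope.
    rewrite Delta_n_sub, (Delta_n_shift d (poly_eval a (S d))).
    change (fun n => poly_eval a (S d) n) with (poly_eval a (S d)). lra.
Qed.

Fixpoint W (x Q k : nat) : nat :=
  match k with O => O | S k' => ((x + Q) * W x Q k' + x ^ k')%nat end.

Lemma W_eq x Q k : ((x + Q) ^ k = x ^ k + Q * W x Q k)%nat.
Proof. induction k; simpl; [lia|]. rewrite IHk. ring. Qed.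

Lemma W_le x Q k : (W x Q (S k) <= S k * (x + Q) ^ k)%nat.
Proof.
  induction k; [simpl; lia|].
  change (W x Q (S (S k))) with ((x + Q) * W x Q (S k) + x ^ (S k))%nat.
  assert (x ^ S k <= (x + Q) ^ S k)%nat by (apply Nat.pow_le_mono_l; lia).
  assert ((x + Q) * W x Q (S k) <= (x + Q) * (S k * (x + Q) ^ k))%nat
    by (apply Nat.mul_le_mono_l; exact IHk).
  change ((x + Q) ^ S k)%nat with ((x + Q) * (x + Q) ^ k)%nat in *. nia.
Qed.

Lemma monomial_step_tdist a k n Q z :
  tdist (poly_term a (S k) n) (poly_term a (S k) (n + Q))
  <= Rabs (a (S k) * INR Q - IZR z) * (INR (S k) * INR (n + Q) ^ k).
Proof.
  unfold tdist, poly_term.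
  set (e := a (S k) * INR Q - IZR z).
  replace (a (S k) * INR n ^ S k - a (S k) * INR (n + Q) ^ S k)
    with (- e * INR (W n Q (S k)) + IZR (- z) * INR (W n Q (S k)))
    by (rewrite <- !pow_INR, W_eq, plus_INR, mult_INR, opp_IZR; unfold e; ring).
  rewrite tnorm_isZ by (apply isZ_mul; [exists (- z)%Z; reflexivity|apply isZ_INR]).
  eapply Rle_trans; [apply tnorm_abs|].
  rewrite Rabs_mult, Rabs_Ropp, (Rabs_right (INR _)) by (apply Rle_ge, pos_INR).
  apply Rmult_le_compat_l; [apply Rabs_pos|].
  rewrite <- pow_INR, <- mult_INR. apply le_INR, W_le.
Qed.

Lemma top_coefficient_near_integer a d q e : 0 < e -> e * 2 ^ d <= 1/4 ->
  almost_period (poly_eval a (S d)) q e (d * (fact (S d) * q)) ->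
  exists z, Rabs (a (S d) * INR (fact (S d) * q) - IZR z) * INR (fact (S d) * q) ^ d
            <= 2 ^ d * e.
Proof.
  intros He Hs Hper.
  destruct (step_difference_Delta a d q) as [Hpoly Htop].
  set (g := fun n => poly_eval a (S d) n - poly_eval a (S d) (n + q)%nat) in *.
  destruct (near_integer_top_difference d g (d * (fact (S d) * q) + 1) (fact (S d) * q) e)
    as [z Hz]; [exact He|exact Hs| |exact Hpoly|lia|].
  - intros n Hn. apply Hper. lia.
  - exists (- z)%Z.
    replace (a (S d) * INR (fact (S d) * q) - IZR (- z)) with (- (Delta_n d g 0%nat - IZR z))
      by (rewrite Htop, mult_INR, opp_IZR; ring).
    rewrite Rabs_Ropp. exact Hz.
Qed.

Lemma top_term_almost_period a d eta r : 0 < eta ->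
  exists eps, 0 < eps /\ exists R : nat, forall q, (1 <= q)%nat ->
  almost_period (poly_eval a (S d)) q eps (R * q) ->
  almost_period (poly_term a (S d)) (fact (S d) * q) eta (r * (fact (S d) * q)).
Proof.
  intro Heta.
  set (K := 2 ^ d * (INR (S d) * INR (S r) ^ d)).
  assert (H2d : 0 < 2 ^ d) by (apply pow_lt; lra).
  assert (HK : 0 < K).
  { unfold K. apply Rmult_lt_0_compat; [exact H2d|].
    apply Rmult_lt_0_compat; [apply lt_0_INR; lia|apply pow_lt, lt_0_INR; lia]. }
  set (e := Rmin (1 / 4 / 2 ^ d) (eta / 2 / K)).
  assert (He : 0 < e) by (apply Rmin_glb_lt; repeat apply Rdiv_lt_0_compat; lra).
  assert (He4 : e * 2 ^ d <= 1/4)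
    by (rewrite Rmult_comm; apply mul_le_of_le_div; [lra|apply Rmin_l]).
  assert (HeK : K * e <= eta / 2) by (apply mul_le_of_le_div; [lra|apply Rmin_r]).
  exists e. split; [exact He|]. exists (d * fact (S d))%nat. intros q Hq Hper.
  set (Q := (fact (S d) * q)%nat).
  destruct (top_coefficient_near_integer a d q e He He4) as [z Hz].
  { apply (almost_period_mono _ _ _ _ _ _ Hper); [lra|unfold Q; lia]. }
  fold Q in Hz. intros n Hn.
  eapply Rle_lt_trans; [apply (monomial_step_tdist a d n Q z)|].
  assert (Hpow : INR (n + Q) ^ d <= INR (S r) ^ d * INR Q ^ d).
  { rewrite <- Rpow_mult_distr. apply pow_incr. split; [apply pos_INR|].
    rewrite <- mult_INR. apply le_INR. nia. }
  assert (Hdist : 0 <= Rabs (a (S d) * INR Q - IZR z)) by apply Rabs_pos.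
  apply Rle_lt_trans with (Rabs (a (S d) * INR Q - IZR z) * INR Q ^ d *
                           (INR (S d) * INR (S r) ^ d)).
  { rewrite Rmult_assoc. apply Rmult_le_compat_l; [exact Hdist|].
    assert (0 <= INR (S d)) by apply pos_INR. nra. }
  apply Rle_lt_trans with (K * e); [|lra].
  unfold K. replace (2 ^ d * (INR (S d) * INR (S r) ^ d) * e)
    with (2 ^ d * e * (INR (S d) * INR (S r) ^ d)) by ring.
  apply Rmult_le_compat_r; [|exact Hz].
  apply Rmult_le_pos; [apply pos_INR|apply pow_le, pos_INR].
Qed.

Definition terms_almost_periodic (a : nat -> R) (d : nat) : Prop :=
  forall eps r, 0 < eps ->
  exists eps', 0 < eps' /\ exists R B : nat, (1 <= B)%nat /\
  forall q, (1 <= q)%nat -> almost_period (poly_eval a d) q eps' (R * q) ->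
  exists m, (1 <= m <= B)%nat /\
    forall k, (k <= d)%nat -> almost_period (poly_term a k) (m * q) eps (r * (m * q)).

(* A constant sequence has every period. *)
Lemma terms_almost_periodic_0 a : terms_almost_periodic a 0.
Proof.
  intros eps r Heps. exists 1. split; [lra|]. exists 0%nat, 1%nat. split; [lia|].
  intros q _ _. exists 1%nat. split; [lia|].
  intros k Hk n _. replace k with 0%nat by lia.
  unfold tdist, poly_term. simpl. rewrite Rminus_diag.
  eapply Rle_lt_trans; [apply tnorm_abs|]. rewrite Rabs_R0. exact Heps.
Qed.

(* Inductive step: (d+1)! q is an almost period of the top term, hence of the
   lower part, to which the hypothesis for degree d applies. *)
Lemma terms_almost_periodic_S a d :
  terms_almost_periodic a d -> terms_almost_periodic a (S d).
Proof.
  intros IH eps r Heps.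
  destruct (IH eps r Heps) as [ed [Hed [Rd [Bd [HBd Hlower]]]]].
  set (M := fact (S d)).
  assert (HM : (1 <= M)%nat) by apply lt_O_fact.
  assert (HBdR : 0 < INR Bd) by (apply lt_0_INR; lia).
  assert (HMR : 0 < INR M) by (apply lt_0_INR; lia).
  set (eta := Rmin (ed / 2) (eps / 2 / INR Bd)).
  assert (Heta : 0 < eta) by (apply Rmin_glb_lt; repeat apply Rdiv_lt_0_compat; lra).
  destruct (top_term_almost_period a d eta (S r * Bd + Rd) Heta) as [et [Het [Rt Htop_of]]].
  set (eps' := Rmin et (ed / 2 / INR M)).
  exists eps'. split; [apply Rmin_glb_lt; [exact Het|repeat apply Rdiv_lt_0_compat; lra]|].
  exists (Rt + Rd * M + M)%nat, (Bd * M)%nat. split; [nia|].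
  intros q Hq Hper.
  assert (Htop : almost_period (poly_term a (S d)) (M * q) eta ((S r * Bd + Rd) * (M * q))).
  { apply (Htop_of q Hq). apply (almost_period_mono _ _ _ _ _ _ Hper); [apply Rmin_l|nia]. }
  assert (Hfull : almost_period (poly_eval a (S d)) (M * q) (INR M * eps') (Rd * (M * q))).
  { apply almost_period_multiple; [lia|].
    apply (almost_period_mono _ _ _ _ _ _ Hper); [lra|nia]. }
  assert (Hlow : almost_period (poly_eval a d) (M * q) ed (Rd * (M * q))).
  { assert (INR M * eps' <= ed / 2) by (apply mul_le_of_le_div; [lra|apply Rmin_r]).
    assert (eta <= ed / 2) by apply Rmin_l.
    apply (almost_period_mono _ _ (INR M * eps' + eta) _ (Rd * (M * q))); [|lra|lia].
    apply (almost_period_sub _ (poly_term a (S d))); [exact Hfull|].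
    apply (almost_period_mono _ _ _ _ _ _ Htop); [lra|nia]. }
  destruct (Hlower (M * q)%nat ltac:(nia) Hlow) as [m [Hm Hterms]].
  exists (m * M)%nat. split; [nia|].
  intros k Hk. replace (m * M * q)%nat with (m * (M * q))%nat by ring.
  destruct (Nat.eq_dec k (S d)) as [->|Hne]; [|apply Hterms; lia].
  (* the top term errs by at most m eta <= Bd eta <= eps / 2 *)
  assert (INR m * eta <= eps / 2).
  { apply Rle_trans with (INR Bd * eta); [apply Rmult_le_compat_r; [lra|apply le_INR; lia]|].
    apply mul_le_of_le_div; [lra|apply Rmin_r]. }
  apply (almost_period_mono _ _ (INR m * eta) _ (r * (m * (M * q)))); [|lra|lia].
  apply almost_period_multiple; [lia|].
  apply (almost_period_mono _ _ _ _ _ _ Htop); [lra|nia].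
Qed.

Lemma all_terms_almost_periodic a d : terms_almost_periodic a d.
Proof.
  induction d as [|d IHd];
    [apply terms_almost_periodic_0|apply terms_almost_periodic_S, IHd].
Qed.

Lemma repetition_common_period d a : repetition (poly_eval a d) ->
  forall eps r, 0 < eps -> (1 <= r)%nat -> exists q, (1 <= q)%nat /\
  forall k, (k <= d)%nat -> almost_period (poly_term a k) q eps (r * q).
Proof.
  intros Hrep eps r He Hr.
  destruct (all_terms_almost_periodic a d eps r He) as [e' [He' [R [B [_ HK]]]]].
  destruct (Hrep e' (S R) He' ltac:(lia)) as [q [Hq Hper]].
  destruct (HK q Hq) as [m [Hm Hterms]]; [intros n Hn; apply Hper; nia|].
  exists (m * q)%nat. split; [nia|exact Hterms].
Qed.

Lemma almost_period_poly_eval a d q e N :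
  (forall k, (k <= d)%nat -> almost_period (poly_term a k) q e N) ->
  almost_period (poly_eval a d) q (INR (S d) * e) N.
Proof.
  induction d as [|d IHd]; intro H.
  - rewrite Rmult_1_l. apply H. lia.
  - rewrite S_INR, Rmult_plus_distr_r, Rmult_1_l.
    apply (almost_period_add (poly_eval a d) (poly_term a (S d)));
      [apply IHd; intros; apply H|apply H]; lia.
Qed.

Lemma index_list_complete d : exists L : list {k : nat | (k <= d)%nat},
  forall k, (k <= d)%nat -> exists x, In x L /\ proj1_sig x = k.
Proof.
  assert (Hprefix : forall m, (m <= S d)%nat -> exists L : list {k : nat | (k <= d)%nat},
            forall k, (k < m)%nat -> exists x, In x L /\ proj1_sig x = k).
  { induction m as [|m IHm]; intro Hm; [exists nil; intros; lia|].
    destruct (IHm ltac:(lia)) as [L HL].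
    assert (Hmd : (m <= d)%nat) by lia.
    exists (exist _ m Hmd :: L). intros k Hk.
    destruct (Nat.eq_dec k m) as [->|Hne]; [exists (exist _ m Hmd); split; [left|]; reflexivity|].
    destruct (HL k ltac:(lia)) as [x [Hx Hxk]]. exists x. split; [right|]; assumption. }
  destruct (Hprefix (S d) (le_n _)) as [L HL]. exists L. intros k Hk. apply HL. lia.
Qed.

Theorem theorem3p4 (d : nat) (a : nat -> R) :
  repetition (fun n => poly_eval a d n) <->
  joint_repetition (fun (k : {k : nat | (k <= d)%nat}) (n : nat) => poly_term a (proj1_sig k) n).
Proof.
  split.
  - intro Hrep. pose proof (repetition_common_period d a Hrep) as Hcommon. split.
    + intros [k Hk] eps r He Hr. destruct (Hcommon eps r He Hr) as [q [Hq Hper]].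
      exists q. split; [exact Hq|exact (Hper k Hk)].
    + intros L eps r He Hr. destruct (Hcommon eps r He Hr) as [q [Hq Hper]].
      exists q. split; [exact Hq|]. intros [k Hk] _. exact (Hper k Hk).
  - intros [_ Hjoint] eps r He Hr.
    destruct (index_list_complete d) as [L HL].
    assert (Hd : 0 < INR (S d)) by (apply lt_0_INR; lia).
    destruct (Hjoint L (eps / INR (S d)) r ltac:(apply Rdiv_lt_0_compat; lra) Hr)
      as [q [Hq Hper]].
    exists q. split; [exact Hq|].
    replace eps with (INR (S d) * (eps / INR (S d))) by (field; lra).
    apply (almost_period_poly_eval a d q (eps / INR (S d)) (r * q)).
    intros k Hk n Hn. destruct (HL k Hk) as [x [Hx <-]]. exact (Hper x Hx n Hn).
Qed.
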